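(* Let $V$ be a real vector space and $C$ a cone in $V$. Assume that $X$ and $Y$ are decomposably $C$-antichain-convex subsets of $V$ that are disjoint. (1) If $X$ is $C$-upward, then $\operatorname{co}(X)$ and $\operatorname{co}(Y)$ are disjoint. (2) If $X$ is $C$-downward, then $\operatorname{co}(X)$ and $\operatorname{co}(Y)$ are disjoint.
   Context: A cone in a real vector space $V$ is a subset $C$ with $\lambda C\subseteq C$ for all $\lambda>0$ (it may be empty and need not contain $0$). A subset $S\subseteq V$ is $C$-antichain-convex iff for all $x,y\in S$ and $\lambda\in[0,1]$ with $y-x\notin C\cup(-C)$ one has $\lambda x+(1-\lambda)y\in S$. $S$ is decomposably $C$-antichain-convex iff $S=S_1+\dots+S_n$ (Minkowski sum) for finitely many $C$-antichain-convex subsets $S_i$ of $V$. $S$ is $C$-upward iff $x\in S$, $y\in V$... precisely: iff for all $x\in S$ and $y$ with $y-x\in C$ one has $y\in S$ (equivalently $S+C\subseteq S$); $S$ is $C$-downward iff for all $x\in S$ and $y$ with $x-y\in C$ one has $y\in S$. $\operatorname{co}$ denotes the convex hull. *)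

From HB Require Import structures.
From mathcomp Require Import all_boot all_order all_algebra.
From mathcomp Require Import boolp classical_sets reals.
Set Implicit Arguments. Unset Strict Implicit. Unset Printing Implicit Defensive.
Import Order.TTheory GRing.Theory Num.Theory.
Local Open Scope classical_set_scope.
Local Open Scope ring_scope.

Section Defs.
Context {R : realType} {V : lmodType R}.

(* A cone: closed under multiplication by positive scalars (may be empty,
   need not contain 0). *)
Definition is_cone (C : set V) : Prop :=
  forall (l : R) (x : V), 0 < l -> C x -> C (l *: x).

Definition negset (C : set V) : set V := [set x | C (- x)].

Definition antichain_convex (C : set V) (S : set V) : Prop :=
  forall (x y : V) (l : R), S x -> S y ->
    ~ (C `|` negset C) (y - x) -> 0 <= l <= 1 ->
    S (l *: x + (1 - l) *: y).

Definition msum (A B : set V) : set V :=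
  [set z | exists a b, A a /\ B b /\ z = a + b].

Definition msum_list (l : seq (set V)) : set V :=
  foldr msum [set 0] l.

Definition decomp_antichain_convex (C : set V) (S : set V) : Prop :=
  exists l : seq (set V), (0 < size l)%N /\
    (forall A, A \in l -> antichain_convex C A) /\ S = msum_list l.

Definition upward (C : set V) (S : set V) : Prop :=
  forall x y, S x -> C (y - x) -> S y.

Definition downward (C : set V) (S : set V) : Prop :=
  forall x y, S x -> C (x - y) -> S y.

Definition conv (S : set V) : set V :=
  [set z | exists (n : nat) (w : 'I_n -> R) (p : 'I_n -> V),
     (forall i, 0 <= w i) /\ \sum_(i < n) w i = 1 /\
     (forall i, S (p i)) /\ z = \sum_(i < n) w i *: p i].

End Defs.

(* Call a set T dominated-convex for a convex cone D if every convex combination of two points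
   of T lies D-below some point of T.  An antichain-convex set is dominated-convex for the convex
   cone K generated by C: if two points are comparable, the larger one dominates the whole segment,
   and otherwise the segment stays inside the set.  Dominated-convexity is preserved by Minkowski
   sums and passes to the convex hull, so every z in co(Y) lies K-below a point y of Y and, by the
   same argument for -C, K-above a point x of X.  Then y - x lies in K and, X being C-upward
   (hence K-upward), y lies in X, contradicting X ∩ Y = ∅.  Downward sets are upward for -C. *)

From HB Require Import structures.
From mathcomp Require Import all_boot all_order all_algebra.
From mathcomp Require Import boolp classical_sets reals.
From mathcomp Require Import ring.
Set Implicit Arguments. Unset Strict Implicit. Unset Printing Implicit Defensive.
Import Order.TTheory GRing.Theory Num.Theory.
Local Open Scope classical_set_scope.
Local Open Scope ring_scope.

Section Convexity.
Variables (R : realType) (V : lmodType R).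

Lemma subr_combr (a b : V) (l : R) :
  b - (l *: a + (1 - l) *: b) = l *: (b - a).
Proof.
by rewrite scalerBl scale1r addrCA opprD addrA subrr add0r opprB scalerBr addrC.
Qed.

Lemma subr_combl (a b : V) (l : R) :
  a - (l *: a + (1 - l) *: b) = (1 - l) *: (a - b).
Proof. by rewrite -subr_combr subKr (addrC (l *: a)). Qed.

Definition convex (E : set V) : Prop :=
  forall (a b : V) (l : R), E a -> E b -> 0 <= l <= 1 -> E (l *: a + (1 - l) *: b).

Lemma convex_normalized_comb (E : set V) : convex E ->
  forall n (w : 'I_n -> R) (p : 'I_n -> V),
  (forall i, 0 <= w i) -> (forall i, E (p i)) -> 0 < \sum_(i < n) w i ->
  E ((\sum_(i < n) w i)^-1 *: \sum_(i < n) w i *: p i).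
Proof.
move=> cvxE; elim=> [|n IHn] w p w_ge0 Ep; first by rewrite big_ord0 ltxx.
rewrite !big_ord_recr /=.
set s' := \sum_(i < n) w (widen_ord (leqnSn n) i).
set S' := \sum_(i < n) w (widen_ord (leqnSn n) i) *: p (widen_ord (leqnSn n) i).
set wn := w ord_max => s_gt0.
have wn_ge0 : 0 <= wn := w_ge0 ord_max.
have [s'0|s'_neq0] := eqVneq s' 0.
  have S'0 : S' = 0.
    apply: big1 => i _.
    by rewrite (psumr_eq0P (fun j _ => w_ge0 (widen_ord (leqnSn n) j)) s'0) ?scale0r.
  rewrite S'0 s'0 !add0r in s_gt0 *.
  by rewrite scalerA mulVf ?scale1r ?gt_eqF.
have s'_gt0 : 0 < s' by rewrite lt_def s'_neq0 sumr_ge0.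
have ES' := IHn (fun i => w (widen_ord (leqnSn n) i)) (fun i => p (widen_ord (leqnSn n) i))
  (fun i => w_ge0 _) (fun i => Ep _) s'_gt0.
have -> : (s' + wn)^-1 *: (S' + wn *: p ord_max) =
    (wn / (s' + wn)) *: p ord_max + (1 - wn / (s' + wn)) *: (s'^-1 *: S').
  rewrite scalerA [in RHS]addrC scalerDr scalerA mulrC; congr (_ *: _ + _).
  by field; rewrite s'_neq0 gt_eqF.
apply: cvxE => //.
by rewrite divr_ge0 ?(ltW s_gt0) //= ler_pdivrMr // mul1r lerDr ltW.
Qed.

Lemma conv_sub_convex (T E : set V) : convex E -> T `<=` E -> conv T `<=` E.
Proof.
move=> cvxE TE z [n [w [p [w_ge0 [w1 [Tp ->]]]]]].
have := convex_normalized_comb cvxE w_ge0 (fun i => TE _ (Tp i)).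
by rewrite w1 invr1 scale1r; apply; rewrite ltr01.
Qed.

End Convexity.

Section Domination.
Variables (R : realType) (V : lmodType R) (D : set V).
Hypothesis D0 : D 0.
Hypothesis DD : forall a b, D a -> D b -> D (a + b).
Hypothesis DZ : forall (l : R) d, 0 <= l -> D d -> D (l *: d).

Definition dominated (T : set V) : set V := [set z | exists2 t, T t & D (t - z)].

Definition dominated_convex (T : set V) : Prop :=
  forall a b (l : R), T a -> T b -> 0 <= l <= 1 -> dominated T (l *: a + (1 - l) *: b).

Lemma sub_dominated (T : set V) : T `<=` dominated T.
Proof. by move=> t Tt; exists t; rewrite ?subrr. Qed.

Lemma convex_dominated (T : set V) : dominated_convex T -> convex (dominated T).
Proof.
move=> domT a b l [ta Tta Dta] [tb Ttb Dtb] /[dup] l01 /andP[l_ge0 l_le1].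
have [t Tt Dt] := domT _ _ _ Tta Ttb l01.
exists t => //.
have -> : t - (l *: a + (1 - l) *: b) =
    t - (l *: ta + (1 - l) *: tb) + (l *: (ta - a) + (1 - l) *: (tb - b)).
  by rewrite !scalerBr [X in _ = _ + X]addrACA -opprD addrA subrK.
by apply/DD/DD => //; apply: DZ; rewrite ?subr_ge0.
Qed.

Lemma conv_dominated (T : set V) : dominated_convex T -> conv T `<=` dominated T.
Proof. by move=> domT; apply: conv_sub_convex (convex_dominated domT) (@sub_dominated T). Qed.

Lemma dominated_convex_msum (A B : set V) :
  dominated_convex A -> dominated_convex B -> dominated_convex (msum A B).
Proof.
move=> domA domB _ _ l [a1 [b1 [Aa1 [Bb1 ->]]]] [a2 [b2 [Aa2 [Bb2 ->]]]] l01.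
have [ta Ata Dta] := domA _ _ _ Aa1 Aa2 l01.
have [tb Btb Dtb] := domB _ _ _ Bb1 Bb2 l01.
exists (ta + tb); first by exists ta, tb.
have -> : ta + tb - (l *: (a1 + b1) + (1 - l) *: (a2 + b2)) =
    (ta - (l *: a1 + (1 - l) *: a2)) + (tb - (l *: b1 + (1 - l) *: b2)).
  by rewrite !scalerDr (addrACA (l *: a1)) opprD addrACA.
exact: DD.
Qed.

Lemma dominated_convex_msum_list (s : seq (set V)) :
  (forall A, A \in s -> dominated_convex A) -> dominated_convex (msum_list s).
Proof.
elim: s => [|A s IHs] doms /=.
  by move=> _ _ l -> -> _; apply: sub_dominated; rewrite !scaler0 addr0.
apply: dominated_convex_msum; first by apply: doms; rewrite mem_head.
by apply: IHs => B sB; apply: doms; rewrite in_cons sB orbT.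
Qed.

Lemma antichain_convex_dominated (C T : set V) :
  C `<=` D -> antichain_convex C T -> dominated_convex T.
Proof.
move=> CD acT a b l Ta Tb /[dup] l01 /andP[l_ge0 l_le1].
have [Cba|nCba] := pselect (C (b - a)).
  by exists b; rewrite // subr_combr; apply/DZ/CD.
have [Cab|nCab] := pselect (C (a - b)).
  by exists a; rewrite // subr_combl; apply/DZ/CD; rewrite ?subr_ge0.
apply: sub_dominated; apply: acT => //.
by case=> //; rewrite /negset /= opprB.
Qed.

Lemma decomp_antichain_convex_dominated (C T : set V) :
  C `<=` D -> decomp_antichain_convex C T -> dominated_convex T.
Proof.
move=> CD [s [_ [acs ->]]].
by apply: dominated_convex_msum_list => A sA; exact: antichain_convex_dominated (acs A sA).
Qed.

End Domination.

Section ConicHull.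
Variables (R : realType) (V : lmodType R) (C : set V).

(* The additive monoid generated by C; for a cone C this is the convex cone spanned by C and 0. *)
Inductive conic_hull : set V :=
| conic_hull0 : conic_hull 0
| conic_hullDl c k : C c -> conic_hull k -> conic_hull (c + k).

Lemma sub_conic_hull : C `<=` conic_hull.
Proof. by move=> c Cc; rewrite -[c]addr0; apply: conic_hullDl => //; apply: conic_hull0. Qed.

Lemma conic_hullD a b : conic_hull a -> conic_hull b -> conic_hull (a + b).
Proof.
elim=> [|c k Cc _ IHk] hull_b; first by rewrite add0r.
by rewrite -addrA; apply: conic_hullDl => //; apply: IHk.
Qed.

Lemma conic_hullZ : is_cone C -> forall (l : R) k, 0 <= l -> conic_hull k -> conic_hull (l *: k).
Proof.
move=> coneC l k; rewrite le_eqVlt => /predU1P[<- _|l_gt0].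
  by rewrite scale0r; apply: conic_hull0.
elim=> [|c k' Cc _ IHk]; first by rewrite scaler0; apply: conic_hull0.
by rewrite scalerDr; apply: conic_hullDl => //; apply: coneC.
Qed.

Lemma upward_conic_hull (X : set V) : upward C X -> upward conic_hull X.
Proof.
move=> upX x y Xx hull_yx; rewrite -(subrK x y) addrC.
elim: hull_yx => [|c k Cc _ Xxk]; first by rewrite addr0.
by apply: upX Xxk _; rewrite addrCA addrK.
Qed.

Lemma conv_dominated_conic_hull (T : set V) : is_cone C ->
  decomp_antichain_convex C T -> conv T `<=` dominated conic_hull T.
Proof.
move=> coneC decT.
have hull0 := conic_hull0; have hullD := conic_hullD; have hullZ := conic_hullZ coneC.
apply: (conv_dominated hull0 hullD hullZ).
exact: (decomp_antichain_convex_dominated hull0 hullD hullZ sub_conic_hull decT).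
Qed.

End ConicHull.

Section Negation.
Variables (R : realType) (V : lmodType R) (C : set V).

Lemma is_cone_negset : is_cone C -> is_cone (negset C).
Proof. by move=> coneC l x l_gt0 Cx; rewrite /negset /= -scalerN; apply: coneC. Qed.

Lemma antichain_convex_negset (S : set V) :
  antichain_convex C S -> antichain_convex (negset C) S.
Proof.
move=> acS x y l Sx Sy ncomp; apply: acS => // -[Cyx|Cxy]; apply: ncomp.
  by right; rewrite /negset /= opprK.
by left.
Qed.

Lemma decomp_antichain_convex_negset (S : set V) :
  decomp_antichain_convex C S -> decomp_antichain_convex (negset C) S.
Proof.
move=> [s [s_gt0 [acs eS]]]; exists s; split=> //; split=> // A sA.
by apply: antichain_convex_negset; apply: acs.
Qed.

Lemma upward_negset (X : set V) : downward C X -> upward (negset C) X.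
Proof. by move=> dnX x y Xx; rewrite /negset /= opprB; apply: dnX. Qed.

Lemma conic_hull_negset v : conic_hull (negset C) v -> conic_hull C (- v).
Proof.
elim=> [|c k Cc _ IHk]; first by rewrite oppr0; apply: conic_hull0.
by rewrite opprD; apply: conic_hullDl.
Qed.

End Negation.

Lemma conv_disjoint_upward (R : realType) (V : lmodType R) (C X Y : set V) :
  is_cone C -> decomp_antichain_convex C X -> decomp_antichain_convex C Y ->
  X `&` Y = set0 -> upward C X -> conv X `&` conv Y = set0.
Proof.
move=> coneC decX decY XY0 upX; apply/seteqP; split=> // z [cXz cYz].
have [y Yy hull_yz] := conv_dominated_conic_hull coneC decY cYz.
have [x Xx hull_xz] := conv_dominated_conic_hull (is_cone_negset coneC)
  (decomp_antichain_convex_negset decX) cXz.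
have Xy : X y.
  apply: upward_conic_hull upX _ _ Xx _.
  rewrite -(subrKA z); apply: conic_hullD hull_yz _.
  by rewrite -opprB; apply: conic_hull_negset.
by have : (X `&` Y) y by []; rewrite XY0.
Qed.

Theorem theorem6 (R : realType) (V : lmodType R) (C X Y : set V) :
  is_cone C ->
  decomp_antichain_convex C X -> decomp_antichain_convex C Y ->
  X `&` Y = set0 ->
  (upward C X -> conv X `&` conv Y = set0) /\
  (downward C X -> conv X `&` conv Y = set0).
Proof.
move=> coneC decX decY XY0; split; first exact: conv_disjoint_upward.
move=> /upward_negset; apply: conv_disjoint_upward XY0.
- exact: is_cone_negset.
- exact: decomp_antichain_convex_negset.
- exact: decomp_antichain_convex_negset.
Qed.
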